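(* Let $\beta>0$, $g\in\mathcal C(\mathbb R^d)$, $v^*\in\mathbb R^d$, and $\rho$ a probability measure on $\mathbb R^d$ with finite first moment and $v^*\in\operatorname{supp}(\rho)$; set $g^*:=g(v^* )$, $g_r:=\sup_{v\in B_r(v^* )}g(v)-g^*$ for $r>0$, and for $\alpha>0$, $v_\alpha(\rho):=\int we^{-\alpha g(w)}d\rho(w)/\int e^{-\alpha g(w)}d\rho(w)$. (a) If there are $\eta,\nu>0$ with $g(v)-g^*\ge(\eta\|v-v^*\|_2)^{1/\nu}-\beta$ for all $v\in\mathbb R^d$, then for all $r>0$ and $q>\beta$, $$\|v_\alpha(\rho)-v^*\|_2\le\frac{(q+g_r)^\nu}{\eta}+\frac{\exp(-\alpha(q-\beta))}{\rho(B_r(v^* ))}\int\|v-v^*\|_2d\rho(v).\qquad( * )$$ (b) If there are $g_\infty,R_0,\eta>0$ and $\nu\in(0,\infty)$ with $g(v)-g^*\ge(\eta\|v-v^*\|_2)^{1/\nu}-\beta$ for all $v\in B_{R_0}(v^* )$ and $g(v)-g^*>g_\infty$ for all $v\notin B_{R_0}(v^* )$, then $( * )$ holds for all $r\in(0,R_0]$ and $q>\beta$ with $q-\beta+g_r\le g_\infty$.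
   Context: $B_r(v)$ denotes the open Euclidean ball of radius $r$ centered at $v$; $\operatorname{supp}(\rho)$ the support of $\rho$. *)

From HB Require Import structures.
From mathcomp Require Import all_boot all_order all_algebra.
From mathcomp Require Import all_classical all_reals all_analysis.
Set Implicit Arguments. Unset Strict Implicit. Unset Printing Implicit Defensive.
Import Order.TTheory GRing.Theory Num.Theory.
Import numFieldNormedType.Exports.
Local Open Scope classical_set_scope.
Local Open Scope ring_scope.

Definition enorm (R : realType) (d : nat) (v : 'rV[R]_d) : R :=
  Num.sqrt (\sum_(i < d) v ord0 i ^+ 2).

Definition eball (R : realType) (d : nat) (c : 'rV[R]_d) (r : R) : set 'rV[R]_d :=
  [set v | enorm (v - c) < r].

(* R^d with its Borel sigma-algebra (generated by the open sets of the
   standard (product = Euclidean) topology on 'rV[R]_d). *)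
Definition Rd (R : realType) (d : nat) :=
  g_sigma_algebraType (@open 'rV[R]_d).

Definition msupp (R : realType) (d : nat)
    (rho : {measure set (Rd R d) -> \bar R}) : set 'rV[R]_d :=
  [set x | forall r : R, 0 < r -> (0 < rho (eball x r))%E].

Definition valpha (R : realType) (d : nat)
    (rho : {measure set (Rd R d) -> \bar R}) (g : 'rV[R]_d -> R) (alpha : R)
    : 'rV[R]_d :=
  \row_(i < d)
    (Rintegral rho setT (fun w : Rd R d => w ord0 i * expR (- alpha * g w))
     / Rintegral rho setT (fun w : Rd R d => expR (- alpha * g w))).

Definition g_r (R : realType) (d : nat) (g : 'rV[R]_d -> R) (vs : 'rV[R]_d) (r : R)
    : R :=
  sup [set g v | v in eball vs r] - g vs.

Definition rhs_bound (R : realType) (d : nat)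
    (rho : {measure set (Rd R d) -> \bar R}) (g : 'rV[R]_d -> R)
    (vs : 'rV[R]_d) (beta eta nu alpha r q : R) : R :=
  powR (q + g_r g vs r) nu / eta
  + expR (- alpha * (q - beta)) / fine (rho (eball vs r))
    * Rintegral rho setT (fun v : Rd R d => enorm (v - vs)).

From HB Require Import structures.
From mathcomp Require Import all_boot all_order all_algebra.
From mathcomp Require Import all_classical all_reals all_analysis.
From mathcomp Require Import ring lra measurable_realfun.
Import Order.TTheory GRing.Theory Num.Theory.
Import numFieldNormedType.Exports.
Local Open Scope classical_set_scope.
Local Open Scope ring_scope.

(* The Gibbs mean v_alpha is the barycentre of rho for the weight
   w(v) = exp (- alpha g(v)), with normaliser Z = int w drho, so that
   |v_alpha - vs| <= int |v - vs| w(v) drho(v) / Z (norm of an integral).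
   Split this integral at the radius t = (q + g_r)^nu / eta: where
   |v - vs| < t it is at most t Z; where |v - vs| >= t the growth condition
   (or, in case (b), the far-field bound g - g* > g_inf >= q - beta + g_r)
   gives g(v) >= g* + q + g_r - beta, hence
   w(v) <= exp (- alpha (q - beta)) exp (- alpha (g* + g_r)).
   Finally w >= exp (- alpha (g* + g_r)) on B_r(vs), so
   Z >= exp (- alpha (g* + g_r)) rho(B_r(vs)) > 0 since vs is in the support,
   and the two exponentials exp (- alpha (g* + g_r)) cancel. *)

Section euclidean_norm.
Context {R : realType} {d : nat}.
Implicit Types (u v : 'rV[R]_d) (a : R).

Lemma enorm_ge0 v : 0 <= enorm v.
Proof. exact: sqrtr_ge0. Qed.

Lemma enorm_sqr v : enorm v ^+ 2 = \sum_(i < d) v ord0 i ^+ 2.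
Proof. by rewrite sqr_sqrtr //; apply: sumr_ge0 => i _; exact: sqr_ge0. Qed.

Lemma enormZ a v : enorm (a *: v) = `|a| * enorm v.
Proof.
rewrite /enorm (eq_bigr (fun i => a ^+ 2 * v ord0 i ^+ 2)); last first.
  by move=> i _; rewrite mxE exprMn.
by rewrite -mulr_sumr sqrtrM ?sqr_ge0 // sqrtr_sqr.
Qed.

Lemma enorm0 : enorm (0 : 'rV[R]_d) = 0.
Proof. by rewrite -(scale0r 0) enormZ normr0 mul0r. Qed.

Lemma enormN v : enorm (- v) = enorm v.
Proof. by rewrite -scaleN1r enormZ normrN1 mul1r. Qed.

Lemma coord_le_enorm v i : `|v ord0 i| <= enorm v.
Proof.
rewrite -sqrtr_sqr ler_sqrt -?enorm_sqr ?sqr_ge0 // enorm_sqr (bigD1 i) //= lerDl.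
by apply: sumr_ge0 => j _; exact: sqr_ge0.
Qed.

Lemma enorm_gt0 v : (0 < enorm v) = (v != 0).
Proof.
rewrite lt_def enorm_ge0 andbT; congr negb; apply/eqP/eqP => [v0|->].
  apply/rowP => i; rewrite mxE; apply/normr0_eq0/eqP.
  by rewrite eq_le normr_ge0 andbT -v0 coord_le_enorm.
exact: enorm0.
Qed.

Lemma CauchySchwarz_enorm u v :
  \sum_(i < d) u ord0 i * v ord0 i <= enorm u * enorm v.
Proof.
have [->|] := eqVneq u 0.
  by rewrite enorm0 mul0r big1 // => i _; rewrite mxE mul0r.
rewrite -enorm_gt0 => A0; have [->|] := eqVneq v 0.
  by rewrite enorm0 mulr0 big1 // => i _; rewrite mxE mulr0.
rewrite -enorm_gt0 => B0; set A := enorm u in A0 *; set B := enorm v in B0 *.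
(* termwise AM-GM: [x y <= (B/A x^2 + A/B y^2) / 2] *)
apply: (@le_trans _ _
    (\sum_(i < d) (B / A * u ord0 i ^+ 2 + A / B * v ord0 i ^+ 2) / 2)).
  apply: ler_sum => i _; rewrite -subr_ge0.
  have -> : (B / A * u ord0 i ^+ 2 + A / B * v ord0 i ^+ 2) / 2 - u ord0 i * v ord0 i
      = (B * u ord0 i - A * v ord0 i) ^+ 2 / (2 * (A * B)).
    by field; rewrite !gt_eqF.
  by rewrite divr_ge0 ?sqr_ge0 // mulr_ge0 // ltW // mulr_gt0.
rewrite -mulr_suml big_split /= -!mulr_sumr -!enorm_sqr -/A -/B.
by rewrite [X in X <= _](_ : _ = A * B) //; field; rewrite !gt_eqF.
Qed.

Lemma enormD u v : enorm (u + v) <= enorm u + enorm v.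
Proof.
rewrite -ler_sqr ?nnegrE ?addr_ge0 ?enorm_ge0 // sqrrD !enorm_sqr.
rewrite (eq_bigr (fun i => u ord0 i ^+ 2 + (u ord0 i * v ord0 i) *+ 2 + v ord0 i ^+ 2));
  last by move=> i _; rewrite mxE sqrrD.
by rewrite !big_split /= lerD2r lerD2l mulr2n lerD ?CauchySchwarz_enorm.
Qed.

Lemma enorm_subr_le u v : enorm (u - v) <= enorm u + enorm v.
Proof. by rewrite -(enormN v) enormD. Qed.

Lemma mx_norm_le_enorm v : `|v| <= enorm v.
Proof.
rewrite /Num.norm /= mx_normrE; apply: bigmax_le => [|[i j] _]; first exact: enorm_ge0.
by rewrite /= (ord1 i); exact: coord_le_enorm.
Qed.

Lemma continuous_enorm : continuous (@enorm R d).
Proof.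
suff cs : forall s : seq 'I_d, continuous (fun v : 'rV[R]_d => \sum_(i <- s) v ord0 i ^+ 2).
  by move=> v; apply: continuous_comp (cs _ v) (@sqrt_continuous R _).
elim=> [|i s IH] v.
  by under eq_fun do rewrite big_nil; exact: cst_continuous.
under eq_fun do rewrite big_cons.
by apply: continuousD (IH v); apply: continuousM; exact: coord_continuous.
Qed.

End euclidean_norm.

Section euclidean_balls.
Context {R : realType} {d : nat}.
Implicit Types (c v : 'rV[R]_d) (r : R).

Lemma continuous_enorm_sub c : continuous (fun v : 'rV[R]_d => enorm (v - c)).
Proof.
move=> v; apply: (@continuous_comp _ _ _ (fun w : 'rV[R]_d => w - c) (@enorm R d)).
  by apply: continuousB; [exact: cvg_id | exact: cst_continuous].
exact: continuous_enorm.
Qed.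

Lemma measurable_eball c r : measurable (eball c r : set (Rd R d)).
Proof.
apply: sub_sigma_algebra.
exact: (continuousP _).1 (continuous_enorm_sub c) _ (@open_lt _ r).
Qed.

Lemma eball_center c r : 0 < r -> eball c r c.
Proof.
by move=> r0; rewrite /eball /= subrr enorm0.
Qed.

Lemma compact_closed_eball c r : compact [set v | enorm (v - c) <= r].
Proof.
apply: bounded_closed_compact; last first.
  exact: preimage_closed (fun v _ => continuous_enorm_sub c v) (@closed_le _ r).
exists (r + `|c|); split; first exact: num_real.
move=> M hM v cv; apply/ltW/(le_lt_trans _ hM).
rewrite -[v](subrK c); apply: le_trans (ler_normD _ _) _.
by rewrite lerD2r (le_trans (mx_norm_le_enorm _)).
Qed.

Variables (g : 'rV[R]_d -> R) (c : 'rV[R]_d).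
Hypothesis cg : continuous g.

Lemma has_ubound_eball_image r : has_ubound [set g v | v in eball c r].
Proof.
have /compact_bounded[M [_ gM]] : compact (g @` [set v | enorm (v - c) <= r]).
  by apply: continuous_compact (compact_closed_eball c r); exact: continuous_subspaceT.
exists (M + 1) => _ [v cv <-].
apply: le_trans (ler_norm _) _; apply: gM; first by rewrite ltrDl.
by exists v => //; exact: ltW.
Qed.

Lemma le_g_r r v : eball c r v -> g v <= g c + g_r g c r.
Proof.
move=> cv; rewrite /g_r addrC subrK.
by apply: ub_le_sup; [exact: has_ubound_eball_image | exists v].
Qed.

Lemma g_r_ge0 r : 0 < r -> 0 <= g_r g c r.
Proof. by move=> r0; rewrite -(lerD2l (g c)) addr0 le_g_r //; exact: eball_center. Qed.

End euclidean_balls.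

Section Rintegral_bounds.
Context {dT : measure_display} {T : measurableType dT} {R : realType}.
Context {mu : {measure set T -> \bar R}}.
Implicit Types f h : T -> R.

Lemma integrableZl_EFin c f : mu.-integrable setT (EFin \o f) ->
  mu.-integrable setT (EFin \o (fun x => c * f x)).
Proof.
move=> intf; exact: eq_integrable (integrableZl measurableT c intf).
Qed.

Lemma integrableD_EFin f h :
  mu.-integrable setT (EFin \o f) -> mu.-integrable setT (EFin \o h) ->
  mu.-integrable setT (EFin \o (fun x => f x + h x)).
Proof.
move=> intf inth; exact: eq_integrable (integrableD measurableT intf inth).
Qed.

Lemma integrable_sum_EFin {I : Type} (s : seq I) (F : I -> T -> R) :
  (forall i, mu.-integrable setT (EFin \o F i)) ->
  mu.-integrable setT (EFin \o (fun x => \sum_(i <- s) F i x)).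
Proof.
move=> intF; elim: s => [|i s ints].
  by under eq_fun do rewrite big_nil; exact: integrable0.
by under eq_fun do rewrite big_cons; exact: integrableD_EFin.
Qed.

Lemma Rintegral_sum {I : Type} (s : seq I) (F : I -> T -> R) :
  (forall i, mu.-integrable setT (EFin \o F i)) ->
  \int[mu]_x (\sum_(i <- s) F i x) = \sum_(i <- s) \int[mu]_x F i x.
Proof.
move=> intF; elim: s => [|i s IH].
  by under eq_fun do rewrite big_nil; rewrite big_nil /Rintegral integral0.
under eq_fun do rewrite big_cons.
by rewrite RintegralD ?IH ?big_cons //; exact: integrable_sum_EFin.
Qed.

Lemma Rintegral_mul_le_split f om rt E :
  (forall x, 0 <= f x) -> (forall x, 0 <= om x) -> 0 <= rt -> 0 <= E ->
  (forall x, rt <= f x -> om x <= E) ->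
  mu.-integrable setT (EFin \o f) -> mu.-integrable setT (EFin \o om) ->
  mu.-integrable setT (EFin \o (fun x => f x * om x)) ->
  \int[mu]_x (f x * om x) <= rt * \int[mu]_x om x + E * \int[mu]_x f x.
Proof.
move=> f0 om0 rt0 E0 omE intf intom intfom.
rewrite -!RintegralZl // -RintegralD //; try exact: integrableZl_EFin.
apply: le_Rintegral => //; first by apply: integrableD_EFin; exact: integrableZl_EFin.
move=> x _; have [far|near] := leP rt (f x).
  by rewrite mulrC ler_wpDl ?mulr_ge0 // ler_wpM2r // omE.
by rewrite ler_wpDr ?mulr_ge0 // ler_wpM2r // ltW.
Qed.

Lemma enorm_Rintegral_le {n : nat} (F : T -> 'rV[R]_n) :
  (forall i, mu.-integrable setT (EFin \o (fun x => F x ord0 i))) ->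
  mu.-integrable setT (EFin \o (fun x => enorm (F x))) ->
  enorm (\row_i \int[mu]_x F x ord0 i) <= \int[mu]_x enorm (F x).
Proof.
move=> intF intnF; set y := \row_i _.
have intyF i : mu.-integrable setT (EFin \o (fun x => y ord0 i * F x ord0 i)).
  exact: integrableZl_EFin.
have [->|y0] := eqVneq y 0.
  by rewrite enorm0; apply: Rintegral_ge0 => x _; exact: enorm_ge0.
rewrite -(ler_pM2l (_ : 0 < enorm y)) ?enorm_gt0 // -expr2 enorm_sqr -RintegralZl //.
have -> : \sum_(i < n) y ord0 i ^+ 2 = \int[mu]_x \sum_(i < n) y ord0 i * F x ord0 i.
  rewrite (Rintegral_sum _ _ intyF); apply: eq_bigr => i _.
  by rewrite RintegralZl // {2}/y mxE expr2.
apply: le_Rintegral => //; [exact: integrable_sum_EFin | exact: integrableZl_EFin |].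
move=> x _; exact: CauchySchwarz_enorm.
Qed.

End Rintegral_bounds.

Lemma cst_measure_le_Rintegral {dT : measure_display} {T : measurableType dT}
    {R : realType} (mu : {finite_measure set T -> \bar R}) (A : set T) (f : T -> R) c :
  measurable A -> mu.-integrable setT (EFin \o f) ->
  (forall x, 0 <= f x) -> (forall x, A x -> c <= f x) ->
  c * fine (mu A) <= \int[mu]_x f x.
Proof.
move=> mA intf f0 cf.
have intA : mu.-integrable setT (EFin \o \1_A) by exact: integrable_indic.
have -> : c * fine (mu A) = \int[mu]_x (c * \1_A x).
  by rewrite RintegralZl // /Rintegral integral_indic // setIT.
apply: le_Rintegral => //; first exact: integrableZl_EFin.
by move=> x _; rewrite /indic; case: (boolP (x \in A)) => [/set_mem /cf|_];
  rewrite ?mulr1 ?mulr0.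
Qed.

Section first_moment.
Context {R : realType} {d : nat}.

Lemma continuous_Rd_measurable (f : 'rV[R]_d -> R) :
  continuous f -> measurable_fun [set: Rd R d] (f : Rd R d -> R).
Proof.
move=> cf; apply: (measurability _ (RGenOpens.measurableE R)).
move=> _ [_ [a [b ->] <-]]; rewrite setTI; apply: sub_sigma_algebra.
exact: (continuousP _).1 cf _ (interval_open _ _).
Qed.

Variable rho : probability (Rd R d) R.
Hypothesis mom : (\int[rho]_(x in setT) (enorm x)%:E < +oo)%E.

Lemma integrable_linear_growth (f : 'rV[R]_d -> R) a b :
  continuous f -> (forall v, `|f v| <= a * enorm v + b) ->
  rho.-integrable setT (EFin \o (f : Rd R d -> R)).
Proof.
move=> cf fab.
have intn : rho.-integrable setT (EFin \o (@enorm R d : Rd R d -> R)).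
  apply/integrableP; split.
    by apply/measurable_EFinP; exact: continuous_Rd_measurable continuous_enorm.
  by under eq_integral do rewrite /= ger0_norm ?enorm_ge0 //.
apply: (le_integrable measurableT _ _ (integrableD_EFin _ _ (integrableZl_EFin a _ intn)
          (finite_measure_integrable_cst rho b measurableT))).
  by apply/measurable_EFinP; exact: continuous_Rd_measurable.
by move=> v _ /=; rewrite lee_fin (le_trans (fab v)) ?ler_norm.
Qed.

End first_moment.

Section Gibbs_weights.
Context {R : realType} {d : nat}.
Variables (rho : probability (Rd R d) R) (g : 'rV[R]_d -> R) (vs : 'rV[R]_d).
Variables (alpha beta : R).
Hypotheses (mom : (\int[rho]_(x in setT) (enorm x)%:E < +oo)%E)
  (cg : continuous g) (vs_supp : vs \in msupp rho) (alpha_gt0 : 0 < alpha)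
  (g_lb : forall v, g vs - beta <= g v).

Let weight (v : 'rV[R]_d) := expR (- alpha * g v).
Let weight_max := expR (- alpha * (g vs - beta)).
Let Z := \int[rho]_v weight v.

Let weight_ge0 v : 0 <= weight v.
Proof. exact: expR_ge0. Qed.

Let weight_le v : weight v <= weight_max.
Proof. by rewrite /weight_max ler_expR !mulNr lerN2 ler_pM2l. Qed.

Let continuous_weight : continuous weight.
Proof.
move=> v; apply: (@continuous_comp _ _ _ g (fun t => expR (- alpha * t))); first exact: cg.
apply: (@continuous_comp _ _ _ (fun t : R => - alpha * t) expR).
  exact: mulrl_continuous.
exact: continuous_expR.
Qed.

Let integrable_weight : rho.-integrable setT (EFin \o (weight : Rd R d -> R)).
Proof.
apply: (integrable_linear_growth rho mom weight 0 weight_max).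
  exact: continuous_weight.
by move=> v; rewrite mul0r add0r ger0_norm.
Qed.

Let integrable_coord_weight i :
  rho.-integrable setT (EFin \o (fun v : Rd R d => v ord0 i * weight v)).
Proof.
apply: (integrable_linear_growth rho mom _ weight_max 0).
  by move=> v; apply: continuousM; [exact: coord_continuous | exact: continuous_weight].
move=> v; rewrite addr0 normrM (ger0_norm (weight_ge0 v)) mulrC.
by apply: ler_pM; rewrite ?normr_ge0 ?coord_le_enorm.
Qed.

Let weighted_dev (v : 'rV[R]_d) := weight v *: (v - vs).

Let enorm_weighted_dev v : enorm (weighted_dev v) = enorm (v - vs) * weight v.
Proof. by rewrite enormZ ger0_norm // mulrC. Qed.

Let weighted_dev_growth v :
  enorm (weighted_dev v) <= weight_max * enorm v + weight_max * enorm vs.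
Proof.
by rewrite enorm_weighted_dev -mulrDr mulrC ler_pM ?enorm_ge0 ?enorm_subr_le.
Qed.

Let continuous_weighted_dev : continuous weighted_dev.
Proof.
move=> v; apply: continuousZ; first exact: continuous_weight.
by apply: continuousB; [exact: cvg_id | exact: cst_continuous].
Qed.

Let integrable_coord_weighted_dev i :
  rho.-integrable setT (EFin \o (fun v : Rd R d => weighted_dev v ord0 i)).
Proof.
apply: (integrable_linear_growth rho mom _ weight_max (weight_max * enorm vs)); last first.
  by move=> v; exact: le_trans (coord_le_enorm _ i) (weighted_dev_growth v).
move=> v; apply: (@continuous_comp _ _ _ weighted_dev (fun m : 'rV[R]_d => m ord0 i)).
  exact: continuous_weighted_dev.
exact: coord_continuous.
Qed.

Let integrable_enorm_weighted_dev :
  rho.-integrable setT (EFin \o (fun v : Rd R d => enorm (weighted_dev v))).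
Proof.
apply: (integrable_linear_growth rho mom _ weight_max (weight_max * enorm vs)).
  move=> v; apply: (@continuous_comp _ _ _ weighted_dev (@enorm R d)).
    exact: continuous_weighted_dev.
  exact: continuous_enorm.
by move=> v; rewrite ger0_norm ?enorm_ge0 // weighted_dev_growth.
Qed.

Let eball_measure_gt0 r : 0 < r -> 0 < fine (rho (eball vs r)).
Proof.
move=> r0; apply: fine_gt0; rewrite (set_mem vs_supp) //=.
by rewrite (le_lt_trans (probability_le1 rho (measurable_eball vs r))) ?ltey.
Qed.

Let Z_ge r : 0 < r ->
  expR (- alpha * (g vs + g_r g vs r)) * fine (rho (eball vs r)) <= Z.
Proof.
move=> r0; apply: cst_measure_le_Rintegral => //; first exact: measurable_eball.
by move=> v /(le_g_r _ _ cg); rewrite ler_expR !mulNr lerN2 ler_pM2l.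
Qed.

Let Z_gt0 : 0 < Z.
Proof.
by apply: lt_le_trans (@Z_ge 1 ltr01); rewrite mulr_gt0 ?expR_gt0 ?eball_measure_gt0.
Qed.

Let valpha_subE :
  valpha rho g alpha - vs = Z^-1 *: \row_i \int[rho]_v weighted_dev v ord0 i.
Proof.
apply/rowP => i; rewrite !mxE.
have -> : \int[rho]_v weighted_dev v ord0 i
          = \int[rho]_v (v ord0 i * weight v) - vs ord0 i * Z.
  rewrite -RintegralZl // -RintegralB //; last exact: integrableZl_EFin.
  by apply: eq_Rintegral => v _; rewrite !mxE mulrBr mulrC [weight v * _]mulrC.
by rewrite /Z; field; rewrite gt_eqF.
Qed.

Lemma enorm_valpha_sub_le r q rt : 0 < r -> 0 <= rt ->
  (forall v, rt <= enorm (v - vs) -> g vs + (q + g_r g vs r - beta) <= g v) ->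
  enorm (valpha rho g alpha - vs)
    <= rt + expR (- alpha * (q - beta)) / fine (rho (eball vs r))
            * \int[rho]_v enorm (v - vs).
Proof.
move=> r0 rt0 g_far.
set E := expR (- alpha * (g vs + (q + g_r g vs r - beta))).
set P := fine (rho (eball vs r)).
have P0 := @eball_measure_gt0 r r0.
have weight_far v : rt <= enorm (v - vs) -> weight v <= E.
  by move/g_far; rewrite ler_expR !mulNr lerN2 ler_pM2l.
have int_dev : rho.-integrable setT (EFin \o (fun v : Rd R d => enorm (v - vs))).
  apply: (integrable_linear_growth rho mom _ 1 (enorm vs)); first exact: continuous_enorm_sub.
  by move=> v; rewrite ger0_norm ?enorm_ge0 // mul1r enorm_subr_le.
have jensen : enorm (valpha rho g alpha - vs)
              <= \int[rho]_v (enorm (v - vs) * weight v) / Z.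
  rewrite valpha_subE enormZ ger0_norm ?invr_ge0 ?(ltW Z_gt0) // mulrC.
  apply: ler_wpM2r; first by rewrite invr_ge0 (ltW Z_gt0).
  under eq_Rintegral do rewrite -enorm_weighted_dev.
  exact: enorm_Rintegral_le.
have split_bound : \int[rho]_v (enorm (v - vs) * weight v)
             <= rt * Z + E * \int[rho]_v enorm (v - vs).
  apply: Rintegral_mul_le_split => //; [by move=> v; exact: enorm_ge0 | exact: expR_ge0 |].
  apply: eq_integrable integrable_enorm_weighted_dev => //= v _.
  by rewrite enorm_weighted_dev.
apply: (le_trans jensen); rewrite ler_pdivrMr //; apply: (le_trans split_bound).
rewrite mulrDl lerD2l.
have int_ge0 : 0 <= \int[rho]_v enorm (v - vs).
  by apply: Rintegral_ge0 => v _; exact: enorm_ge0.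
have -> : E * \int[rho]_v enorm (v - vs) = expR (- alpha * (q - beta)) / P
    * \int[rho]_v enorm (v - vs) * (expR (- alpha * (g vs + g_r g vs r)) * P).
  have -> : E = expR (- alpha * (q - beta)) * expR (- alpha * (g vs + g_r g vs r)).
    by rewrite -expRD; congr expR; ring.
  by field; rewrite gt_eqF.
apply: ler_wpM2l (@Z_ge r r0).
by rewrite mulr_ge0 // divr_ge0 ?expR_ge0 // ltW.
Qed.

End Gibbs_weights.

Lemma le_powR_root {R : realType} (eta nu c t : R) :
  0 < eta -> 0 < nu -> 0 <= c -> powR c nu / eta <= t -> c <= powR (eta * t) (1 / nu).
Proof.
move=> eta0 nu0 c0; rewrite ler_pdivrMr // mulrC => ct.
have -> : c = powR (powR c nu) (1 / nu) by rewrite -powRrM mul1r mulfV ?powRr1 ?gt_eqF.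
apply: ge0_ler_powR; rewrite ?nnegrE ?powR_ge0 //; first by rewrite divr_ge0 // ltW.
exact: le_trans (powR_ge0 _ _) ct.
Qed.

Theorem mainTheorem16 (R : realType) (d : nat) (beta : R) (g : 'rV[R]_d -> R)
    (vs : 'rV[R]_d) (rho : probability (Rd R d) R) :
  0 < beta ->
  continuous g ->
  (\int[rho]_(x in setT) (enorm x)%:E < +oo)%E ->
  vs \in msupp rho ->
  (* (a) *)
  (forall eta nu : R, 0 < eta -> 0 < nu ->
     (forall v : 'rV[R]_d,
        g v - g vs >= powR (eta * enorm (v - vs)) (1 / nu) - beta) ->
     forall alpha r q : R, 0 < alpha -> 0 < r -> beta < q ->
       enorm (valpha rho g alpha - vs)
         <= rhs_bound rho g vs beta eta nu alpha r q)
  /\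
  (* (b) *)
  (forall ginf R0 eta nu : R, 0 < ginf -> 0 < R0 -> 0 < eta -> 0 < nu ->
     (forall v : 'rV[R]_d, eball vs R0 v ->
        g v - g vs >= powR (eta * enorm (v - vs)) (1 / nu) - beta) ->
     (forall v : 'rV[R]_d, ~ eball vs R0 v -> g v - g vs > ginf) ->
     forall alpha r q : R, 0 < alpha -> 0 < r -> r <= R0 -> beta < q ->
       q - beta + g_r g vs r <= ginf ->
       enorm (valpha rho g alpha - vs)
         <= rhs_bound rho g vs beta eta nu alpha r q).
Proof.
move=> beta0 cg mom vs_supp.
have c_ge0 r q : 0 < r -> beta < q -> 0 <= q + g_r g vs r.
  by move=> r0 qbeta; rewrite addr_ge0 ?g_r_ge0 // ltW // (lt_trans beta0).
split.
  move=> eta nu eta0 nu0 growth alpha r q alpha0 r0 qbeta.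
  have c0 := c_ge0 r q r0 qbeta.
  apply: enorm_valpha_sub_le => //.
  - by move=> v; have := growth v; have := powR_ge0 (eta * enorm (v - vs)) (1 / nu); lra.
  - by rewrite divr_ge0 ?powR_ge0 // ltW.
  - by move=> v /(le_powR_root _ _ _ _ eta0 nu0 c0); have := growth v; lra.
move=> ginf R0 eta nu ginf0 R00 eta0 nu0 growth g_out alpha r q alpha0 r0 rR0 qbeta q_ginf.
have c0 := c_ge0 r q r0 qbeta.
apply: enorm_valpha_sub_le => //.
- move=> v; have [vB|vB] := pselect (eball vs R0 v); last by have := g_out v vB; lra.
  by have := growth v vB; have := powR_ge0 (eta * enorm (v - vs)) (1 / nu); lra.
- by rewrite divr_ge0 ?powR_ge0 // ltW.
- move=> v; have [vB|vB] := pselect (eball vs R0 v); last by have := g_out v vB; lra.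
  by move/(le_powR_root _ _ _ _ eta0 nu0 c0); have := growth v vB; lra.
Qed.
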